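(* Let $n$ be a positive integer and $m=n+1$. Then for every zero-normalized $\Gamma_{m,n}$-semimodule $\Delta$, $G_n(\widehat{\Delta})=\big(G_n(\Delta)\big)^T$, where $T$ denotes transposition (conjugation) of Young diagrams.
   Context: Let $m,n$ be coprime positive integers and $\Gamma=\{am+bn:a,b\in\mathbb{Z}_{\ge0}\}$. A $\Gamma$-semimodule is $\Delta\subset\mathbb{Z}_{\ge0}$ with $\Delta+\Gamma\subset\Delta$; zero-normalized means $\min\Delta=0$. An $n$-generator of $\Delta$ is $a\in\Delta$ with $a-n\notin\Delta$; there are exactly $n$ of them, $b_1<\dots<b_n$. Put $g_n(x)=\#(([x,x+m)\cap\mathbb{Z})\setminus\Delta)$; then $g_n(b_1)\ge\dots\ge g_n(b_n)$ and $G_n(\Delta)$ is the Young diagram with these column heights. The dual semimodule is $\Delta^*=\{\varphi\in\mathbb{Z}:\varphi+\Delta\subset\Gamma\}$, and $\widehat\Delta=\Delta^*-\min\Delta^*$ (equivalently $\widehat\Delta=\max(\mathbb{Z}\setminus\Delta)-(\mathbb{Z}\setminus\Delta)$). *)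

From mathcomp Require Import all_boot.
From Stdlib Require Import ClassicalEpsilon.

Set Implicit Arguments.
Unset Strict Implicit.
Unset Printing Implicit Defensive.

(* Subsets of Z_{>=0} are represented as predicates on nat. *)

Definition inGamma (m n x : nat) : Prop := exists a b : nat, x = a * m + b * n.

Definition semimodule (m n : nat) (D : nat -> Prop) : Prop :=
  forall d x, D d -> inGamma m n x -> D (d + x).

(* zero-normalized: min Delta = 0 (Delta \subset Z_{>=0}, so this is 0 \in Delta) *)
Definition zero_normalized (D : nat -> Prop) : Prop := D 0.

Definition asb (P : Prop) : bool :=
  if excluded_middle_informative P then true else false.

(* a is an n-generator of Delta: a \in Delta and a - n \notin Delta
   (a - n < 0 is never in Delta \subset Z_{>=0}) *)
Definition is_ngen (n : nat) (D : nat -> Prop) (a : nat) : Prop :=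
  D a /\ ~ (n <= a /\ D (a - n)).

Definition ngens (n : nat) (D : nat -> Prop) : seq nat :=
  epsilon (inhabits [::])
    (fun s : seq nat => sorted ltn s /\ forall a, a \in s <-> is_ngen n D a).

Definition gn (m : nat) (D : nat -> Prop) (x : nat) : nat :=
  count (fun y => ~~ asb (D y)) (iota x m).

(* Young diagrams as sets of cells (i, j) (0-indexed: column i, row j). *)
Definition diagram := (nat * nat) -> Prop.

(* G_n(Delta): n columns, the i-th (0-indexed) of height g_n(b_{i+1}) *)
Definition Gn (m n : nat) (D : nat -> Prop) : diagram :=
  fun c => c.1 < n /\ c.2 < gn m D (nth 0 (ngens n D) c.1).

Definition transpose (Y : diagram) : diagram := fun c => Y (c.2, c.1).

(* dual semimodule Delta^* = { phi : phi + Delta \subset Gamma }.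
   Since 0 \in Delta and Gamma \subset Z_{>=0}, Delta^* \subset Z_{>=0},
   so phi ranges over nat without loss. *)
Definition dual (m n : nat) (D : nat -> Prop) (phi : nat) : Prop :=
  forall d, D d -> inGamma m n (phi + d).

Definition min_dual (m n : nat) (D : nat -> Prop) : nat :=
  epsilon (inhabits 0)
    (fun c => dual m n D c /\ forall y, dual m n D y -> c <= y).

Definition hat (m n : nat) (D : nat -> Prop) : nat -> Prop :=
  fun x => dual m n D (x + min_dual m n D).

From mathcomp Require Import all_boot zify.
From Stdlib Require Import ClassicalEpsilon Classical.

(* For m = n + 1 the semigroup Gamma is symmetric: with c = n(n - 1) its
   conductor, x is in Gamma iff c - 1 - x is not.  Hence phi is in Delta^* iff
   c - 1 - phi is not in Delta, so hat Delta is the mirror image of the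
   complement of Delta: x is in hat Delta iff E - 1 - x is not in Delta, where
   E - 1 is the largest gap of Delta.  The mirror sends the n-generators
   b_1 < ... < b_n of Delta to E + n - 1 - b_n < ... < E + n - 1 - b_1.
   Since Delta + n is contained in Delta, for b in Delta the window [b, b + n)
   meets every residue class mod n once, and its element of a class is a gap
   iff the n-generator of that class exceeds b + n; the last point b + n of
   [b, b + m) lies in Delta.  So g_n(b_i) = #{k | b_i + n < b_k}, and the cell
   (i, j) of G_n(hat Delta) means b_j + n < b_(n+1-i), which is the condition
   for the cell (j, i) of G_n(Delta). *)

Set Implicit Arguments.
Unset Strict Implicit.
Unset Printing Implicit Defensive.

Lemma asbP (P : Prop) : asb P <-> P.
Proof. by rewrite /asb; case: excluded_middle_informative. Qed.

Section Gamma.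

Variable n : nat.
Hypothesis n_gt0 : 0 < n.

Lemma inGammaE x : inGamma n.+1 n x <-> x %% n <= x %/ n.
Proof.
split=> [[a [b ->]] | le_mod_div].
- have -> : a * n.+1 + b * n = (a + b + a %/ n) * n + a %% n.
    by have := divn_eq a n; lia.
  have a_mod_lt := ltn_pmod a n_gt0.
  rewrite modnMDl (modn_small a_mod_lt) divnMDl // (divn_small a_mod_lt).
  by rewrite addn0 -addnA (leq_trans (leq_mod a n)) ?leq_addr.
- exists (x %% n), (x %/ n - x %% n); have := divn_eq x n; nia.
Qed.

Lemma inGamma_ge x : n * n.-1 <= x -> inGamma n.+1 n x.
Proof.
move=> le_x; apply/inGammaE.
have := leq_div2r n le_x; rewrite mulKn // => le_div.
by have := ltn_pmod x n_gt0; lia.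
Qed.

Lemma inGamma_sym x y : x + y + 1 = n * n.-1 ->
  inGamma n.+1 n x <-> ~ inGamma n.+1 n y.
Proof.
rewrite !inGammaE => xy_sum.
have := divn_eq x n; have := divn_eq y n.
have := ltn_pmod x n_gt0; have := ltn_pmod y n_gt0.
move: (x %/ n) (x %% n) (y %/ n) (y %% n) => q r q' r' r'_lt r_lt y_eq x_eq.
have [q_sum r_sum] : q + q' + 2 = n /\ r + r' + 1 = n.
  subst x y; case: (ltngtP (q + q' + 2) n) => q_sum.
  - by have := leq_mul q_sum (leqnn n); nia.
  - by have := leq_mul q_sum (leqnn n); nia.
  - nia.
lia.
Qed.

End Gamma.

Section Dual.

Variables (n : nat) (D : nat -> Prop).
Hypothesis n_gt0 : 0 < n.
Hypothesis D_semimodule : semimodule n.+1 n D.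

Lemma semimodule_addn_closed x : D x -> D (x + n).
Proof. by move=> Dx; apply: D_semimodule Dx _; exists 0, 1; lia. Qed.

Lemma dualE phi :
  dual n.+1 n D phi <-> ~ (phi < n * n.-1 /\ D (n * n.-1 - 1 - phi)).
Proof.
split=> [phi_dual [lt_phi D_phi] | not_D d Dd].
- have sum_c : 0 + (n * n.-1 - 1) + 1 = n * n.-1 by lia.
  have /(inGamma_sym n_gt0 sum_c) gap : inGamma n.+1 n 0 by exists 0, 0.
  apply: gap; have := phi_dual _ D_phi.
  by have -> : phi + (n * n.-1 - 1 - phi) = n * n.-1 - 1 by lia.
- have [le_c | lt_c] := leqP (n * n.-1) (phi + d); first exact: inGamma_ge.
  apply: NNPP => not_gamma.
  have sum_c : n * n.-1 - 1 - (phi + d) + (phi + d) + 1 = n * n.-1 by lia.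
  have := D_semimodule Dd (proj2 (inGamma_sym n_gt0 sum_c) not_gamma).
  have -> : d + (n * n.-1 - 1 - (phi + d)) = n * n.-1 - 1 - phi by lia.
  by move=> D_phi; apply: not_D; split; first lia.
Qed.

Lemma min_dualP : dual n.+1 n D (min_dual n.+1 n D) /\
  forall y, dual n.+1 n D y -> min_dual n.+1 n D <= y.
Proof.
apply: (epsilon_spec (inhabits 0)
  (fun c => dual n.+1 n D c /\ forall y, dual n.+1 n D y -> c <= y)).
have ex_dual : exists x, asb (dual n.+1 n D x).
  by exists (n * n.-1); apply/asbP/dualE => -[]; rewrite ltnn.
have [x /asbP x_dual x_min] := ex_minnP ex_dual.
by exists x; split=> // y /asbP; apply: x_min.
Qed.

Lemma hat_mirror : zero_normalized D ->
  exists E, (forall x, hat n.+1 n D x <-> ~ (x < E /\ D (E - 1 - x))) /\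
            (forall x, E <= x -> D x).
Proof.
move=> D0; have [mu_dual mu_min] := min_dualP.
set mu := min_dual n.+1 n D in mu_dual mu_min *.
have le_mu : mu <= n * n.-1 by apply: mu_min; apply/dualE => -[]; rewrite ltnn.
exists (n * n.-1 - mu); split=> x.
- rewrite /hat -/mu dualE.
  have -> : n * n.-1 - 1 - (x + mu) = n * n.-1 - mu - 1 - x by lia.
  by split=> not_D [lt_x D_x]; apply: not_D; split=> //; lia.
- move=> le_x; have [le_cx | lt_xc] := leqP (n * n.-1) x.
    by have := D_semimodule D0 (inGamma_ge n_gt0 le_cx).
  have : ~ dual n.+1 n D (n * n.-1 - 1 - x) by move/mu_min; lia.
  rewrite dualE => /NNPP[_].
  by have -> : n * n.-1 - 1 - (n * n.-1 - 1 - x) = x by lia.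
Qed.

End Dual.

Lemma modn_addn_leq n x y : 0 < n -> x %% n = y %% n -> x < y -> x + n <= y.
Proof.
move=> n_gt0 eq_mod lt_xy.
have /dvdn_leq : n %| y - x by rewrite -eqn_mod_dvd ?(ltnW lt_xy) // eq_mod.
by rewrite subn_gt0 => /(_ lt_xy); lia.
Qed.

Lemma modn_subn n a : n <= a -> (a - n) %% n = a %% n.
Proof. by move=> le_na; rewrite -[in RHS](subnK le_na) modnDr. Qed.

Lemma perm_iota_modn n b : 0 < n ->
  perm_eq [seq y %% n | y <- iota b n] (iota 0 n).
Proof.
move=> n_gt0.
have mod_uniq : uniq [seq y %% n | y <- iota b n].
  rewrite map_inj_in_uniq ?iota_uniq // => x y.
  rewrite !mem_iota => /andP[bx xb] /andP[b_y yb] eq_mod.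
  case: (ltngtP x y) => // [lt_xy | lt_yx].
  - by have := modn_addn_leq n_gt0 eq_mod lt_xy; lia.
  - by have := modn_addn_leq n_gt0 (esym eq_mod) lt_yx; lia.
have mod_sub : {subset [seq y %% n | y <- iota b n] <= iota 0 n}.
  by move=> _ /mapP[y _ ->]; rewrite mem_iota ltn_pmod.
have [|_ mod_eq] := uniq_min_size mod_uniq mod_sub.
  by rewrite size_map !size_iota.
exact: uniq_perm mod_uniq (iota_uniq 0 n) mod_eq.
Qed.

Definition ngen_diagram (n : nat) (s : seq nat) : diagram :=
  fun c => c.1 < size s /\ c.2 < count (fun g => nth 0 s c.1 + n < g) s.

Section NGenerators.

Variables (n : nat) (P : nat -> Prop).
Hypothesis n_gt0 : 0 < n.
Hypothesis P_closed : forall x, P x -> P (x + n).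
Hypothesis P_full : exists K, forall x, K <= x -> P x.

Lemma closed_eq_modn x y : P x -> x <= y -> x %% n = y %% n -> P y.
Proof.
move=> Px le_xy eq_mod.
have : n %| y - x by rewrite -eqn_mod_dvd // eq_mod.
case/dvdnP=> k y_eq; have -> : y = x + k * n by lia.
by elim: k {y_eq} => [|k IHk]; rewrite ?addn0 // mulSnr addnA; apply: P_closed.
Qed.

Definition least_in_class (r : nat) : nat :=
  epsilon (inhabits 0)
    (fun x => P x /\ x %% n = r /\ forall y, P y -> y %% n = r -> x <= y).

Lemma least_in_classP r : r < n ->
  [/\ P (least_in_class r), least_in_class r %% n = r
    & forall y, P y -> y %% n = r -> least_in_class r <= y].
Proof.
move=> lt_rn.
suff [Px [mod_x min_x]] :
    P (least_in_class r) /\ least_in_class r %% n = r /\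
    forall y, P y -> y %% n = r -> least_in_class r <= y by [].
apply: (epsilon_spec (inhabits 0)
  (fun x => P x /\ x %% n = r /\ forall y, P y -> y %% n = r -> x <= y)).
have [K P_ge_K] := P_full.
have ex_x : exists x, asb (P x) && (x %% n == r).
  exists (K * n + r); rewrite modnMDl modn_small // eqxx andbT.
  by apply/asbP/P_ge_K; nia.
case: (ex_minnP ex_x) => x /andP[/asbP Px /eqP mod_x] min_x.
exists x; split; [done | split=> // y Py mod_y].
by apply: min_x; rewrite mod_y eqxx andbT; apply/asbP.
Qed.

Lemma is_ngenE a : is_ngen n P a <-> a = least_in_class (a %% n).
Proof.
have [P_min mod_min min_le] := least_in_classP (ltn_pmod a n_gt0).
split=> [[Pa not_Pan] | a_eq].
- apply/eqP; rewrite eqn_leq min_le // andbT leqNgt; apply/negP => lt_min.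
  have le_min := modn_addn_leq n_gt0 mod_min lt_min.
  apply: not_Pan; split; first by lia.
  by apply: (closed_eq_modn P_min); rewrite ?mod_min ?modn_subn //; lia.
- split=> [|[le_n P_sub]]; first by rewrite a_eq.
  by have := min_le _ P_sub (modn_subn le_n); rewrite -a_eq; lia.
Qed.

Lemma ngensP :
  sorted ltn (ngens n P) /\ forall a, a \in ngens n P <-> is_ngen n P a.
Proof using P_full.
apply: (epsilon_spec (inhabits [::])
  (fun s => sorted ltn s /\ forall a, a \in s <-> is_ngen n P a)).
have [K P_ge_K] := P_full.
exists [seq x <- iota 0 (K + n) | asb (is_ngen n P x)]; split.
  exact/sorted_filter/iota_ltn_sorted/ltn_trans.
move=> a; rewrite mem_filter mem_iota /=; split=> [/andP[/asbP //] | ngen_a].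
apply/andP; split; first exact/asbP.
rewrite ltnNge; apply/negP => le_a; case: ngen_a => _ [].
have le_na : n <= a := leq_trans (leq_addl K n) le_a.
by split; last by apply: P_ge_K; rewrite leq_subRL // addnC.
Qed.

Lemma perm_ngens : perm_eq (ngens n P) [seq least_in_class r | r <- iota 0 n].
Proof.
have [sorted_ngens mem_ngens] := ngensP.
apply: uniq_perm.
- exact: sorted_uniq ltn_trans ltnn _ sorted_ngens.
- rewrite map_inj_in_uniq ?iota_uniq // => r r'.
  rewrite !mem_iota /= => lt_rn lt_r'n.
  have [_ mod_r _] := least_in_classP lt_rn.
  have [_ mod_r' _] := least_in_classP lt_r'n.
  by rewrite -{2}mod_r -{2}mod_r' => ->.
- move=> a; apply/idP/mapP => [/mem_ngens/is_ngenE a_eq | [r]].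
    by exists (a %% n); rewrite // mem_iota ltn_pmod.
  rewrite mem_iota /= => lt_rn ->; apply/mem_ngens/is_ngenE.
  by have [_ -> _] := least_in_classP lt_rn.
Qed.

Lemma size_ngens : size (ngens n P) = n.
Proof. by rewrite (perm_size perm_ngens) size_map size_iota. Qed.

Lemma gap_least_in_class b y : P b -> b <= y < b + n ->
  ~~ asb (P y) = (b + n < least_in_class (y %% n)).
Proof.
move=> Pb /andP[le_by lt_y].
have [P_min mod_min min_le] := least_in_classP (ltn_pmod y n_gt0).
have [/asbP Py | not_Py] := boolP (asb (P y)).
  by have := min_le _ Py erefl; lia.
have lt_y_min : y < least_in_class (y %% n).
  rewrite ltnNge; apply: contraNN not_Py => le_min.
  exact/asbP/(closed_eq_modn P_min).
have le_min := modn_addn_leq n_gt0 (esym mod_min) lt_y_min.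
have [min_eq | ne_min] := eqVneq (least_in_class (y %% n)) (b + n); last by lia.
have mod_by : b %% n = y %% n by rewrite -(modnDr b n) -min_eq mod_min.
exfalso; move/negP: not_Py; apply; apply/asbP.
move: le_by; rewrite leq_eqVlt => /orP[/eqP<- // | lt_by].
by have := modn_addn_leq n_gt0 mod_by lt_by; lia.
Qed.

Lemma gn_count_ngens b : P b ->
  gn n.+1 P b = count (fun g => b + n < g) (ngens n P).
Proof.
move=> Pb; rewrite /gn -addn1 iotaD count_cat /=.
have -> : asb (P (b + n)) = true by apply/asbP/P_closed.
rewrite !addn0 (permP perm_ngens) count_map.
rewrite -(permP (perm_iota_modn b n_gt0)) count_map.
apply: eq_in_count => y; rewrite mem_iota => y_in.
exact: gap_least_in_class.
Qed.

Lemma Gn_ngen_diagram c : Gn n.+1 n P c <-> ngen_diagram n (ngens n P) c.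
Proof.
case: c => i j; rewrite /Gn /ngen_diagram /= size_ngens.
have [lt_in | ge_in] := ltnP i n; last by split=> -[lt_i]; lia.
have [_ mem_ngens] := ngensP.
have [P_nth _] : is_ngen n P (nth 0 (ngens n P) i).
  by apply/mem_ngens/mem_nth; rewrite size_ngens.
by rewrite gn_count_ngens.
Qed.

End NGenerators.

Lemma count_sorted_prefix (T : eqType) (x0 : T) (r : rel T) (a : pred T) s j :
  transitive r -> sorted r s -> (forall x y, r x y -> a y -> a x) ->
  (j < count a s) = (j < size s) && a (nth x0 s j).
Proof.
move=> r_trans + a_down; elim: s j => [|x s IHs] j //= xs_sorted.
have s_sorted := path_sorted xs_sorted.
have /allP x_min := order_path_min r_trans xs_sorted.
have [ax | not_ax] := boolP (a x).
  by case: j => [|j] //=; rewrite add1n ltnS IHs.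
have not_a_s y : y \in s -> a y = false.
  by move=> ys; apply: contraNF not_ax; apply: a_down (x_min y ys).
have -> : count a s = 0.
  apply/eqP; rewrite -leqn0 leqNgt -has_count.
  by apply/hasP => -[y /not_a_s ->].
case: j => [|j] /=; first by rewrite (negbTE not_ax).
rewrite ltnS; case: (ltnP j (size s)) => [/(mem_nth x0)/not_a_s-> | //].
by rewrite andbF.
Qed.

Lemma count_gtn_sorted s y j : sorted ltn s ->
  (j < count (fun g => y < g) s) =
  (j < size s) && (y < nth 0 s (size s - j.+1)).
Proof.
move=> s_sorted.
rewrite -count_rev (@count_sorted_prefix _ 0 (fun x z => z < x) _ _ j).
- by rewrite size_rev; case: ltnP => //= lt_j; rewrite nth_rev.
- by move=> x z w /= lt_xz lt_wx; apply: ltn_trans lt_wx lt_xz.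
- by rewrite rev_sorted.
- by move=> x z /= lt_zx lt_yz; apply: ltn_trans lt_yz lt_zx.
Qed.

Lemma ngen_diagramE n s i j : sorted ltn s ->
  ngen_diagram n s (i, j) <->
  [/\ i < size s, j < size s & nth 0 s i + n < nth 0 s (size s - j.+1)].
Proof.
move=> s_sorted; rewrite /ngen_diagram /= count_gtn_sorted //.
by split=> [[-> /andP[-> ->]] | [-> -> ->]].
Qed.

Lemma ngen_diagram_mirror n C s c : sorted ltn s -> {in s, forall g, g <= C} ->
  ngen_diagram n (rev [seq C - g | g <- s]) c <->
  transpose (ngen_diagram n s) c.
Proof.
move=> s_sorted s_le; case: c => i j.
apply: iff_trans (iff_sym (ngen_diagramE n j i s_sorted)).
rewrite /ngen_diagram /= size_rev size_map count_rev count_map.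
have [lt_is | ge_is] := ltnP i (size s); last by split=> -[]; lia.
have lt_i' : size s - i.+1 < size s by lia.
rewrite nth_rev ?size_map // (nth_map 0) //.
set b := nth 0 s (size s - i.+1).
have le_b : b <= C := s_le _ (mem_nth 0 lt_i').
have mirror_ltn (g : nat) : g <= C -> (C - b + n < C - g) = (g + n < b).
  by move=> le_g; apply/idP/idP; lia.
rewrite (@eq_in_count _ _ (fun g => g + n < b)); last first.
  by move=> g /s_le /mirror_ltn.
rewrite (count_sorted_prefix 0 j ltn_trans s_sorted); last first.
  by move=> x z /= lt_xz; apply: leq_ltn_trans; rewrite leq_add2r ltnW.
by split=> [[_ /andP[-> ->]] | [-> _ ->]].
Qed.

Section Mirror.

Variables (n E : nat) (P Q : nat -> Prop).
Hypothesis n_gt0 : 0 < n.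
Hypothesis P_closed : forall x, P x -> P (x + n).
Hypothesis P_ge : forall x, E <= x -> P x.
Hypothesis Q_mirror : forall x, Q x <-> ~ (x < E /\ P (E - 1 - x)).

Lemma ngen_leq g : is_ngen n P g -> g <= E + n - 1.
Proof.
move=> [_ not_Pgn]; rewrite leqNgt; apply/negP => lt_g.
by apply: not_Pgn; split; [lia | apply: P_ge; lia].
Qed.

Lemma mirror_closed x : Q x -> Q (x + n).
Proof.
move=> /Q_mirror Qx; apply/Q_mirror => -[lt_x P_x]; apply: Qx; split; first lia.
by have := P_closed P_x; have -> : E - 1 - (x + n) + n = E - 1 - x by lia.
Qed.

Lemma mirror_ge x : E <= x -> Q x.
Proof. by move=> le_x; apply/Q_mirror => -[]; lia. Qed.

Lemma is_ngen_mirror a :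
  is_ngen n Q a <-> a <= E + n - 1 /\ is_ngen n P (E + n - 1 - a).
Proof.
split=> [[Qa not_Qan] | [le_a [Pa' not_Pa'n]]].
- have le_a : a <= E + n - 1.
    rewrite leqNgt; apply/negP => lt_a; apply: not_Qan; split; first lia.
    by apply: mirror_ge; lia.
  split=> //; split.
    have [le_na | lt_an] := leqP n a; last by apply: P_ge; lia.
    have /Q_mirror/NNPP[_] : ~ Q (a - n) by move=> Qan; apply: not_Qan.
    by have -> : E - 1 - (a - n) = E + n - 1 - a by lia.
  move=> [le_n P_an]; move/Q_mirror: Qa; apply; split; first lia.
  by have -> : E - 1 - a = E + n - 1 - a - n by lia.
- split.
    apply/Q_mirror => -[lt_a P_a]; apply: not_Pa'n; split; first lia.
    by have -> : E + n - 1 - a - n = E - 1 - a by lia.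
  move=> [le_na]; apply/Q_mirror; apply; split; first lia.
  by have -> : E - 1 - (a - n) = E + n - 1 - a by lia.
Qed.

Lemma ngens_mirror : ngens n Q = rev [seq E + n - 1 - g | g <- ngens n P].
Proof.
have [Q_sorted mem_Q] := ngensP n (ex_intro _ E mirror_ge).
have [P_sorted mem_P] := ngensP n (ex_intro _ E P_ge).
apply: (irr_sorted_eq ltn_trans ltnn) => //.
  rewrite rev_sorted.
  apply: (homo_sorted_in (P := fun g => g <= E + n - 1)) P_sorted.
    by move=> x y /= le_x le_y lt_xy; move: le_x le_y; rewrite /in_mem /=; lia.
  by apply/allP => g /mem_P /ngen_leq.
move=> a; rewrite mem_rev; apply/idP/mapP.
  move=> /mem_Q/is_ngen_mirror[le_a ngen_a].
  by exists (E + n - 1 - a); [apply/mem_P | lia].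
move=> [g /mem_P ngen_g ->]; apply/mem_Q/is_ngen_mirror.
have le_g := ngen_leq ngen_g.
by split; [lia | have -> : E + n - 1 - (E + n - 1 - g) = g by lia].
Qed.

Lemma Gn_mirror c : Gn n.+1 n Q c <-> transpose (Gn n.+1 n P) c.
Proof.
have P_full : exists K, forall x, K <= x -> P x by exists E.
have Q_full : exists K, forall x, K <= x -> Q x by exists E; apply: mirror_ge.
have [P_sorted mem_P] := ngensP n P_full.
rewrite /transpose.
apply: iff_trans (Gn_ngen_diagram n_gt0 mirror_closed Q_full c) _.
have ngens_le : {in ngens n P, forall g, g <= E + n - 1}.
  by move=> g /mem_P /ngen_leq.
rewrite ngens_mirror.
apply: iff_trans (ngen_diagram_mirror n c P_sorted ngens_le) _.
exact: iff_sym (Gn_ngen_diagram n_gt0 P_closed P_full (c.2, c.1)).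
Qed.

End Mirror.

Theorem mainTheorem8 (n : nat) (D : nat -> Prop) :
  0 < n ->
  semimodule n.+1 n D ->
  zero_normalized D ->
  forall c : nat * nat,
    Gn n.+1 n (hat n.+1 n D) c <-> transpose (Gn n.+1 n D) c.
Proof.
move=> n_gt0 D_semimodule D0 c.
have [E [hatE D_ge]] := hat_mirror n_gt0 D_semimodule D0.
exact: Gn_mirror n_gt0 (semimodule_addn_closed n_gt0 D_semimodule) D_ge hatE c.
Qed.
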